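(* Let $\lambda$ and $\mu$ be infinite cardinals with $\mu^\lambda=\mu$. Then $\mu^+\to_{hc}(\mu)^2_\lambda$: for every coloring $c:[\mu^+]^2\to\lambda$ there exist $i<\lambda$ and $A\subseteq\mu^+$ with $|A|=\mu$ such that the graph $(A,c^{-1}(i)\cap[A]^2)$ is highly connected.
   Context: $[S]^2$ denotes the set of $2$-element subsets of $S$. A graph $G=(V,E)$ is highly connected if for every $D\subseteq V$ with $|D|<|V|$ the graph induced on $V\setminus D$ is connected. For cardinals $\nu,\mu,\lambda$, $\nu\to_{hc}(\mu)^2_\lambda$ means: for every $c:[\nu]^2\to\lambda$ there exist $\xi<\lambda$ and $X\subseteq\nu$ with $|X|=\mu$ such that $(X,c^{-1}(\xi)\cap[X]^2)$ is highly connected. *)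

(* cardinals represented by types, compared via injections. *)
From Stdlib Require Import Relations.

Definition inj_le (A B : Type) : Prop :=
  exists f : A -> B, forall x y, f x = f y -> x = y.

Definition equipotent (A B : Type) : Prop :=
  exists (f : A -> B) (g : B -> A),
    (forall x, g (f x) = x) /\ (forall y, f (g y) = y).

Definition card_lt (A B : Type) : Prop := inj_le A B /\ ~ inj_le B A.

Definition infinite (A : Type) : Prop := inj_le nat A.

Definition is_succ_card (M P : Type) : Prop :=
  card_lt M P /\
  forall S : P -> Prop, inj_le {x | S x} M \/ equipotent {x | S x} P.

Definition connected_on (V : Type) (W : V -> Prop) (E : V -> V -> Prop) : Prop :=
  forall x y, W x -> W y ->
    clos_refl_trans V (fun u v => W u /\ W v /\ E u v) x y.

Definition highly_connected (V : Type) (A : V -> Prop) (E : V -> V -> Prop) : Prop :=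
  forall D : V -> Prop, (forall x, D x -> A x) ->
    card_lt {x | D x} {x | A x} ->
    connected_on V (fun x => A x /\ ~ D x) E.

(* Build a hull N of P of size |M| by closing under "the k-th realizer": for
   every family B of |L| points of N and colour pattern t, if at least |M| points w
   satisfy c w (B j) = t j for all j, then N contains |M| of them.  As |M|^|L| = |M|,
   only |M| points of P lie in a realizer set with fewer than |M| points, so some
   delta lies in none: every pattern delta shows over N is realized |M| times in N.
   A diagonal argument (an |L|-colouring of M has a colour class of size |M|, again
   by |M|^|L| = |M|) yields a colour i such that for all x, y in N, |M| points w of N
   look like delta from x and y and satisfy c delta w = i.  The colour-i part
   A = {w in N | c delta w = i} is then highly connected: x, y in A have |M| common
   neighbours w, because c w x = c delta x = i. *)

From Stdlib Require Import Classical ClassicalEpsilon FunctionalExtensionality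
  ProofIrrelevance Relations FinFun.

Lemma proj1_sig_inj (A : Type) (S : A -> Prop) : Injective (@proj1_sig A S).
Proof. intros [x Hx] [y Hy] E. simpl in E. subst. apply subset_eq_compat. reflexivity. Qed.

Lemma inj_le_refl (A : Type) : inj_le A A.
Proof. exists (fun a => a). auto. Qed.

Lemma inj_le_trans (A B C : Type) : inj_le A B -> inj_le B C -> inj_le A C.
Proof. intros [f Hf] [g Hg]. exists (fun a => g (f a)). intros x y E. apply Hf, Hg, E. Qed.

Lemma equipotent_sym (A B : Type) : equipotent A B -> equipotent B A.
Proof. intros [f [g [gf fg]]]. exists g, f. auto. Qed.

Lemma equipotent_inj_le (A B : Type) : equipotent A B -> inj_le A B.
Proof.
  intros [f [g [gf _]]]. exists f. intros x y E.
  rewrite <- (gf x), <- (gf y), E. reflexivity.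
Qed.

Section SchroederBernstein.
Variables (A B : Type) (f : A -> B) (g : B -> A).
Hypothesis (Hg : Injective g).

(* The points reached from A \ g(B) by iterating g \o f; use f on them, g^-1 elsewhere. *)
Inductive gap_chain : A -> Prop :=
| gap_chain_base a : (forall b, g b <> a) -> gap_chain a
| gap_chain_step a : gap_chain a -> gap_chain (g (f a)).

Lemma not_gap_chain_range a : ~ gap_chain a -> exists b, g b = a.
Proof.
  intro Ha. apply NNPP. intro Hb. apply Ha. apply gap_chain_base.
  intros b E. apply Hb. exists b. exact E.
Qed.

Lemma gap_chain_range b : gap_chain (g b) -> exists a, gap_chain a /\ f a = b.
Proof.
  intro H. remember (g b) as x eqn:Ex. destruct H as [a Ha|a Ha].
  - exfalso. exact (Ha b (eq_sym Ex)).
  - exists a. split; [exact Ha|]. apply Hg. exact Ex.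
Qed.

Definition sb_forth (a : A) : B :=
  match excluded_middle_informative (gap_chain a) with
  | left _ => f a
  | right Ha => proj1_sig (constructive_indefinite_description _ (not_gap_chain_range a Ha))
  end.

Definition sb_back (b : B) : A :=
  match excluded_middle_informative (gap_chain (g b)) with
  | left Hb => proj1_sig (constructive_indefinite_description _ (gap_chain_range b Hb))
  | right _ => g b
  end.

Hypothesis (Hf : Injective f).

Lemma sb_back_forth a : sb_back (sb_forth a) = a.
Proof.
  unfold sb_forth. destruct (excluded_middle_informative (gap_chain a)) as [Ha|Ha].
  - unfold sb_back. destruct (excluded_middle_informative (gap_chain (g (f a)))) as [H|H].
    + destruct (constructive_indefinite_description _ (gap_chain_range (f a) H)) as [a' [? E]].
      apply Hf, E.
    + exfalso. exact (H (gap_chain_step a Ha)).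
  - destruct (constructive_indefinite_description _ (not_gap_chain_range a Ha)) as [b Eb].
    simpl. unfold sb_back. destruct (excluded_middle_informative (gap_chain (g b))) as [H|H].
    + exfalso. rewrite Eb in H. exact (Ha H).
    + exact Eb.
Qed.

Lemma sb_forth_back b : sb_forth (sb_back b) = b.
Proof.
  unfold sb_back. destruct (excluded_middle_informative (gap_chain (g b))) as [H|H].
  - destruct (constructive_indefinite_description _ (gap_chain_range b H)) as [a [Ha E]].
    simpl. unfold sb_forth.
    destruct (excluded_middle_informative (gap_chain a)); [exact E | contradiction].
  - unfold sb_forth. destruct (excluded_middle_informative (gap_chain (g b))) as [H'|H'];
      [contradiction|].
    destruct (constructive_indefinite_description _ (not_gap_chain_range (g b) H')) as [b' E].
    apply Hg, E.
Qed.

End SchroederBernstein.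

Theorem inj_le_antisym (A B : Type) : inj_le A B -> inj_le B A -> equipotent A B.
Proof.
  intros [f Hf] [g Hg]. exists (sb_forth A B f g), (sb_back A B f g Hg).
  split; [exact (sb_back_forth A B f g Hg Hf) | exact (sb_forth_back A B f g Hg)].
Qed.

Lemma infinite_two_points (A : Type) : infinite A -> exists a0 a1 : A, a0 <> a1.
Proof. intros [f Hf]. exists (f 0), (f 1). intro E. discriminate (Hf _ _ E). Qed.

Lemma inj_le_prod (A A' B B' : Type) :
  inj_le A A' -> inj_le B B' -> inj_le (A * B) (A' * B').
Proof.
  intros [f Hf] [g Hg]. exists (fun p => (f (fst p), g (snd p))).
  intros [a b] [a' b'] E. injection E as Ea Eb. f_equal; auto.
Qed.

Lemma inj_le_option (A B : Type) : inj_le A B -> inj_le (option A) (option B).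
Proof.
  intros [f Hf]. exists (option_map f).
  intros [a|] [a'|] E; try discriminate; [injection E as E; f_equal; auto | reflexivity].
Qed.

Lemma inj_le_arrow (A B B' : Type) : inj_le B B' -> inj_le (A -> B) (A -> B').
Proof.
  intros [f Hf]. exists (fun h a => f (h a)). intros h h' E.
  apply functional_extensionality. intro a. apply Hf. exact (equal_f E a).
Qed.

Lemma inj_le_arrow_pair (A B : Type) : inj_le (A * bool -> B) (A -> B * B).
Proof.
  exists (fun h a => (h (a, false), h (a, true))). intros h h' E.
  apply functional_extensionality. intros [a b].
  pose proof (equal_f E a) as Ea. injection Ea. destruct b; auto.
Qed.

Lemma inj_le_square_arrow (A B : Type) (a0 a1 : A) :
  a0 <> a1 -> inj_le (B * B) (A -> B).
Proof.
  intro Ha. exists (fun p a => if excluded_middle_informative (a = a0) then fst p else snd p).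
  intros [x y] [x' y'] E. pose proof (equal_f E a0) as E0. pose proof (equal_f E a1) as E1.
  simpl in E0, E1.
  destruct (excluded_middle_informative (a0 = a0)) as [_|]; [|congruence].
  destruct (excluded_middle_informative (a1 = a0)); [congruence|]. congruence.
Qed.

Lemma inj_le_bool_square (B : Type) (b0 b1 : B) : b0 <> b1 -> inj_le (bool * B) (B * B).
Proof.
  intro Hb. exists (fun p : bool * B => (snd p, if fst p then b1 else b0)).
  intros [[|] x] [[|] y] E; injection E; intros; subst; congruence.
Qed.

Lemma inj_le_option_bool (B : Type) (b : B) : inj_le (option B) (bool * B).
Proof.
  exists (fun o => match o with Some x => (true, x) | None => (false, b) end).
  intros [x|] [y|] E; try discriminate; [injection E as -> | ]; reflexivity.
Qed.

Lemma inj_le_indicator (A B : Type) (b0 b1 : B) : b0 <> b1 -> inj_le A (A -> B).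
Proof.
  intro Hb. exists (fun a a' => if excluded_middle_informative (a' = a) then b1 else b0).
  intros a a' E. pose proof (equal_f E a) as Ea. simpl in Ea.
  destruct (excluded_middle_informative (a = a)) as [_|]; [|congruence].
  destruct (excluded_middle_informative (a = a')); congruence.
Qed.

Section Subsets.
Variables M P : Type.

Definition big (S : P -> Prop) : Prop := exists e : M -> P, Injective e /\ forall m, S (e m).
Definition small (S : P -> Prop) : Prop := inj_le {x | S x} M.

Lemma big_inj_le (S : P -> Prop) : big S <-> inj_le M {x | S x}.
Proof.
  split.
  - intros [e [He HS]]. exists (fun m => exist S (e m) (HS m)).
    intros m m' E. apply He. exact (f_equal (@proj1_sig _ _) E).
  - intros [e He]. exists (fun m => proj1_sig (e m)). split.
    + intros m m' E. apply He, proj1_sig_inj, E.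
    + intro m. exact (proj2_sig (e m)).
Qed.

Lemma big_mono (S T : P -> Prop) : (forall x, S x -> T x) -> big S -> big T.
Proof. intros HST [e [He HS]]. exists e. auto. Qed.

Lemma small_mono (S T : P -> Prop) : (forall x, S x -> T x) -> small T -> small S.
Proof.
  intros HST [h Hh]. exists (fun x => h (exist T (proj1_sig x) (HST _ (proj2_sig x)))).
  intros x y E. apply proj1_sig_inj. apply Hh in E. exact (f_equal (@proj1_sig _ _) E).
Qed.

Lemma small_guard (S : P -> Prop) : small (fun x => small S /\ S x).
Proof.
  destruct (classic (small S)) as [HS|HS].
  - apply small_mono with S; [tauto | exact HS].
  - exists (fun x : {x | small S /\ S x} => False_rect M (HS (proj1 (proj2_sig x)))).
    intros [x [H ?]]. contradiction.
Qed.

Lemma small_union (I : Type) (S : I -> P -> Prop) :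
  inj_le (I * M) M -> (forall i, small (S i)) -> small (fun x => exists i, S i x).
Proof.
  intros HIM HS. apply inj_le_trans with (I * M)%type; [|exact HIM].
  pose (h i := proj1_sig (constructive_indefinite_description _ (HS i))).
  assert (Hh : forall i, Injective (h i))
    by (intro i; exact (proj2_sig (constructive_indefinite_description _ (HS i)))).
  exists (fun x => let (i, Hi) := constructive_indefinite_description _ (proj2_sig x) in
              (i, h i (exist _ (proj1_sig x) Hi))).
  intros [x Hx] [y Hy]. simpl.
  destruct (constructive_indefinite_description _ Hx) as [i Hi].
  destruct (constructive_indefinite_description _ Hy) as [j Hj].
  intro E. injection E as <- E. apply Hh in E.
  apply proj1_sig_inj. exact (f_equal (@proj1_sig _ _) E).
Qed.

Lemma small_range (T : Type) (h : T -> P) : inj_le T M -> small (fun x => exists t, h t = x).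
Proof.
  apply inj_le_trans.
  exists (fun x : {x | exists t, h t = x} =>
            proj1_sig (constructive_indefinite_description _ (proj2_sig x))).
  intros [x Hx] [y Hy]. simpl.
  destruct (constructive_indefinite_description _ Hx) as [t Ht].
  destruct (constructive_indefinite_description _ Hy) as [t' Ht'].
  simpl. intros <-. apply proj1_sig_inj. simpl. congruence.
Qed.

Lemma small_not_full (S : P -> Prop) : ~ inj_le P M -> small S -> exists p, ~ S p.
Proof.
  intros HPM HS. apply not_all_ex_not. intro Hall. apply HPM.
  apply inj_le_trans with {x | S x}; [|exact HS].
  exists (fun p => exist S p (Hall p)). intros p q E. exact (f_equal (@proj1_sig _ _) E).
Qed.

(* Two disjoint copies of M in S; the point p can lie in at most one of them. *)
Lemma big_remove (S : P -> Prop) (p : P) :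
  inj_le (bool * M) M -> big S -> big (fun x => S x /\ x <> p).
Proof.
  intros [o Ho] [e [He HS]].
  assert (Hcopy : exists b, forall m, e (o (b, m)) <> p).
  { destruct (classic (exists m, e (o (true, m)) = p)) as [[m0 Hm0]|Hno].
    - exists false. intros m E. rewrite <- Hm0 in E. apply He, Ho in E. discriminate.
    - exists true. intros m E. apply Hno. exists m. exact E. }
  destruct Hcopy as [b Hb]. exists (fun m => e (o (b, m))). split.
  - intros m m' E. apply He, Ho in E. injection E. auto.
  - intro m. auto.
Qed.

Lemma succ_card_small_or_big : is_succ_card M P -> forall S, small S \/ big S.
Proof.
  intros [[HMP _] Hsplit] S. destruct (Hsplit S) as [H|H]; [left; exact H | right].
  apply big_inj_le. apply inj_le_trans with P; [exact HMP|].
  apply equipotent_inj_le, equipotent_sym, H.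
Qed.

End Subsets.

Arguments big M {P} S.
Arguments small M {P} S.

Section Terms.
Variables J L M : Type.

Inductive term : Type :=
| leaf : term
| node : M -> (J -> L) -> (J -> term) -> term.

Fixpoint term_code (enc : option (M * (J -> L) * (J -> M)) -> M) (tau : term) : M :=
  match tau with
  | leaf => enc None
  | node k t F => enc (Some (k, t, fun j => term_code enc (F j)))
  end.

Lemma term_code_inj (enc : option (M * (J -> L) * (J -> M)) -> M) :
  Injective enc -> Injective (term_code enc).
Proof.
  intros Henc tau. induction tau as [|k t F IH]; intros [|k' t' F'] E;
    simpl in E; apply Henc in E; try discriminate; [reflexivity|].
  injection E as -> -> EF. f_equal. apply functional_extensionality. intro j.
  apply IH. exact (equal_f EF j).
Qed.

Lemma term_inj_le : inj_le (option (M * (J -> L) * (J -> M))) M -> inj_le term M.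
Proof. intros [enc Henc]. exists (term_code enc). exact (term_code_inj enc Henc). Qed.

End Terms.

Arguments leaf {J L M}.
Arguments node {J L M}.

Lemma color_class_full (L M : Type) : equipotent (L -> M) M ->
  forall col : M -> L, exists (i : L) (s : M -> M), Injective s /\ forall d, col (s d) = i.
Proof.
  intros [f [g [gf _]]] col.
  assert (Hi : exists i, forall d, exists m, col m = i /\ g m i = d).
  { (* otherwise choose d_i missed at colour i for every i; m := f (i |-> d_i) is a contradiction *)
    apply NNPP. intro Hno.
    assert (Hmiss : forall i, exists d, forall m, col m = i -> g m i <> d).
    { intro i. apply NNPP. intro H. apply Hno. exists i. intro d. apply NNPP. intro Hd.
      apply H. exists d. intros m Hm Hg. apply Hd. exists m. split; assumption. }
    destruct (choice _ Hmiss) as [dd Hdd].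
    apply (Hdd (col (f dd)) (f dd) eq_refl). rewrite gf. reflexivity. }
  destruct Hi as [i Hi]. destruct (choice _ Hi) as [s Hs].
  exists i, s. split.
  - intros d d' E. rewrite <- (proj2 (Hs d)), <- (proj2 (Hs d')), E. reflexivity.
  - intro d. apply Hs.
Qed.

Section Construction.
Variables L M P : Type.
Hypotheses (HL : infinite L) (HM : infinite M) (Hexp : equipotent (L -> M) M).

Lemma square_inj_le : inj_le (M * M) M.
Proof.
  destruct (infinite_two_points L HL) as [l0 [l1 Hl]].
  apply inj_le_trans with (L -> M).
  - exact (inj_le_square_arrow L M l0 l1 Hl).
  - exact (equipotent_inj_le _ _ Hexp).
Qed.

Lemma bool_prod_inj_le : inj_le (bool * M) M.
Proof.
  destruct (infinite_two_points M HM) as [m0 [m1 Hm]].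
  apply inj_le_trans with (M * M)%type.
  - exact (inj_le_bool_square M m0 m1 Hm).
  - exact square_inj_le.
Qed.

Lemma option_inj_le : inj_le (option M) M.
Proof.
  destruct HM as [n _].
  apply inj_le_trans with (bool * M)%type; [|exact bool_prod_inj_le].
  exact (inj_le_option_bool M (n 0)).
Qed.

Lemma exponent_inj_le : inj_le L M.
Proof.
  destruct (infinite_two_points M HM) as [m0 [m1 Hm]].
  apply inj_le_trans with (L -> M).
  - exact (inj_le_indicator L M m0 m1 Hm).
  - exact (equipotent_inj_le _ _ Hexp).
Qed.

Lemma pow_inj_le (X : Type) : inj_le X M -> inj_le (L * bool -> X) M.
Proof.
  intro HX.
  apply inj_le_trans with (L * bool -> M); [exact (inj_le_arrow _ _ _ HX)|].
  apply inj_le_trans with (L -> M * M); [apply inj_le_arrow_pair|].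
  apply inj_le_trans with (L -> M); [exact (inj_le_arrow _ _ _ square_inj_le)|].
  exact (equipotent_inj_le _ _ Hexp).
Qed.

(* Nodes are indexed by L * bool so that a single node can carry an L-indexed
   family of pairs of subterms (see [exists_good_color]). *)
Local Notation term := (term (L * bool) L M).

Lemma term_inj_le_M : inj_le term M.
Proof.
  apply term_inj_le.
  apply inj_le_trans with (option M); [|exact option_inj_le].
  apply inj_le_option.
  apply inj_le_trans with (M * M)%type; [|exact square_inj_le].
  apply inj_le_prod; [|exact (pow_inj_le M (inj_le_refl M))].
  apply inj_le_trans with (M * M)%type; [|exact square_inj_le].
  apply inj_le_prod; [exact (inj_le_refl M) | exact (pow_inj_le L exponent_inj_le)].
Qed.

Variables (c : P -> P -> L) (p0 : P).

Definition realizers (B : L * bool -> P) (t : L * bool -> L) (w : P) : Prop :=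
  forall j, c w (B j) = t j.

(* An injective enumeration of S when S is big; junk (constantly p0) otherwise. *)
Definition enum (S : P -> Prop) : M -> P :=
  epsilon (inhabits (fun _ => p0)) (fun e => Injective e /\ forall m, S (e m)).

Lemma enum_spec (S : P -> Prop) : big M S -> Injective (enum S) /\ forall m, S (enum S m).
Proof. exact (epsilon_spec _ (fun e => Injective e /\ forall m, S (e m))). Qed.

Fixpoint ev (tau : term) : P :=
  match tau with
  | leaf => p0
  | node k t F => enum (realizers (fun j => ev (F j)) t) k
  end.

Definition hull (w : P) : Prop := exists tau, ev tau = w.

Lemma hull_small : small M hull.
Proof. exact (small_range M P term ev term_inj_le_M). Qed.

Definition small_realized (w : P) : Prop :=
  exists (F : L * bool -> term) (t : L * bool -> L),
    small M (realizers (fun j => ev (F j)) t) /\ realizers (fun j => ev (F j)) t w.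

Lemma small_realized_small : small M small_realized.
Proof.
  pose (R (Ft : (L * bool -> term) * (L * bool -> L)) :=
          realizers (fun j => ev (fst Ft j)) (snd Ft)).
  apply small_mono with (fun w => exists Ft, small M (R Ft) /\ R Ft w).
  - intros w [F [t Hw]]. exists (F, t). exact Hw.
  - apply small_union; [|intro Ft; apply small_guard].
    apply inj_le_trans with (M * M)%type; [|exact square_inj_le].
    apply inj_le_prod; [|exact (inj_le_refl M)].
    apply inj_le_trans with (M * M)%type; [|exact square_inj_le].
    apply inj_le_prod;
      [exact (pow_inj_le _ term_inj_le_M) | exact (pow_inj_le _ exponent_inj_le)].
Qed.

Definition generic (delta : P) : Prop :=
  forall F : L * bool -> term,
    big M (realizers (fun j => ev (F j)) (fun j => c delta (ev (F j)))).

Lemma exists_generic : is_succ_card M P -> exists delta, generic delta.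
Proof.
  intro HP. pose proof (proj2 (proj1 HP)) as HPM.
  destruct (small_not_full M P small_realized HPM small_realized_small) as [delta Hdelta].
  exists delta. intro F.
  pose (t j := c delta (ev (F j))).
  destruct (succ_card_small_or_big M P HP (realizers (fun j => ev (F j)) t)) as [Hs|Hb];
    [|exact Hb].
  exfalso. apply Hdelta. exists F, t. split; [exact Hs|]. intro j. reflexivity.
Qed.

Section Generic.
Variable delta : P.

Definition twins (i : L) (t1 t2 : term) (w : P) : Prop :=
  hull w /\ c w (ev t1) = c delta (ev t1) /\ c w (ev t2) = c delta (ev t2) /\ c delta w = i.

Definition color_part (i : L) (w : P) : Prop := hull w /\ c delta w = i.

Hypothesis Hdelta : generic delta.

Lemma exists_good_color : exists i, forall t1 t2, big M (twins i t1 t2).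
Proof.
  apply NNPP. intro Hno.
  assert (Hbad : forall i, exists t : term * term, ~ big M (twins i (fst t) (snd t))).
  { intro i. apply NNPP. intro H. apply Hno. exists i. intros t1 t2. apply NNPP. intro Hn.
    apply H. exists (t1, t2). exact Hn. }
  destruct (choice _ Hbad) as [pick Hpick].
  pose (F (j : L * bool) := if snd j then snd (pick (fst j)) else fst (pick (fst j))).
  pose (S := realizers (fun j => ev (F j)) (fun j => c delta (ev (F j)))).
  destruct (enum_spec S (Hdelta F)) as [He HeS].
  destruct (color_class_full L M Hexp (fun m => c delta (enum S m))) as [i [s [Hs Hcol]]].
  apply (Hpick i). exists (fun d => enum S (s d)). split.
  - intros d d' E. apply Hs, He, E.
  - intro d. split; [|split; [|split]].
    + exists (node (s d) (fun j => c delta (ev (F j))) F). reflexivity.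
    + exact (HeS (s d) (i, false)).
    + exact (HeS (s d) (i, true)).
    + apply Hcol.
Qed.

Lemma color_part_equipotent (i : L) :
  big M (twins i leaf leaf) -> equipotent {w | color_part i w} M.
Proof.
  intro Hi. apply inj_le_antisym.
  - apply small_mono with hull; [intros w [Hw _]; exact Hw | exact hull_small].
  - apply big_inj_le. apply big_mono with (twins i leaf leaf); [|exact Hi].
    intros w [Hw [_ [_ Hdw]]]. split; assumption.
Qed.

Hypothesis Hc : forall x y, c x y = c y x.

(* Two vertices x, y of the part have |M| common neighbours w, since c w x = c delta x = i. *)
Lemma color_part_highly_connected (i : L) :
  (forall t1 t2, big M (twins i t1 t2)) ->
  highly_connected P (color_part i) (fun u v => u <> v /\ c u v = i).
Proof.
  intros Hi D _ [_ HnAD] x y [[[tx <-] Hx] HxD] [[[ty <-] Hy] HyD].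
  pose (W w := (twins i tx ty w /\ w <> ev tx) /\ w <> ev ty).
  assert (HW : big M W).
  { apply big_remove; [exact bool_prod_inj_le|].
    apply big_remove; [exact bool_prod_inj_le | apply Hi]. }
  assert (Hw : exists w, W w /\ ~ D w).
  { apply NNPP. intro Hno. apply HnAD. apply inj_le_trans with M.
    - apply small_mono with hull; [intros w [Hw _]; exact Hw | exact hull_small].
    - apply big_inj_le. apply big_mono with W; [|exact HW].
      intros w Hw. apply NNPP. intro HDw. apply Hno. exists w. split; assumption. }
  destruct Hw as [w [[[[Hhw [Hwx [Hwy Hdw]]] Hnx] Hny] HDw]].
  apply rt_trans with w; apply rt_step.
  - split; [split; [split; [exists tx; reflexivity | exact Hx] | exact HxD]|].
    split; [split; [split; [exact Hhw | exact Hdw] | exact HDw]|].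
    split; [congruence|]. rewrite Hc, Hwx. exact Hx.
  - split; [split; [split; [exact Hhw | exact Hdw] | exact HDw]|].
    split; [split; [split; [exists ty; reflexivity | exact Hy] | exact HyD]|].
    split; [exact Hny|]. rewrite Hwy. exact Hy.
Qed.

End Generic.
End Construction.

Theorem mainTheorem6 (L M P : Type)
  (HL : infinite L) (HM : infinite M)
  (Hexp : equipotent (L -> M) M)
  (HP : is_succ_card M P)
  (c : P -> P -> L) (Hc : forall x y, c x y = c y x) :
  exists (i : L) (A : P -> Prop),
    equipotent {x | A x} M /\
    highly_connected P A (fun u v => u <> v /\ c u v = i).
Proof.
  destruct (proj1 (proj1 HP)) as [e _]. pose proof HM as [n _].
  pose (p0 := e (n 0)).
  destruct (exists_generic L M P HL HM Hexp c p0 HP) as [delta Hdelta].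
  destruct (exists_good_color L M P Hexp c p0 delta Hdelta) as [i Hi].
  exists i, (color_part L M P c p0 delta i). split.
  - exact (color_part_equipotent L M P HL HM Hexp c p0 delta i (Hi leaf leaf)).
  - exact (color_part_highly_connected L M P HL HM Hexp c p0 delta Hc i Hi).
Qed.
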